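(* Let $\boldsymbol X \in \mathbb{R}^{n\times d}$, $\boldsymbol y \in \mathbb{R}^n$, $\boldsymbol M = \boldsymbol X^\top \boldsymbol X$, $\boldsymbol r = \boldsymbol X^\top \boldsymbol y$. Assume (A1) $\boldsymbol r > \mathbf 0$ and (A2) $M_{ij}\le 0$ for all $i\neq j$. Let $\boldsymbol C>\mathbf 0$, $\boldsymbol k>\mathbf 0$ in $\mathbb{R}^d$, and for $\varepsilon>0$ let $\boldsymbol\theta^{(\varepsilon)}(t)$ solve $$\frac{\mathrm d \theta_i}{\mathrm d t} = \theta_i\Big(r_i - \sum_{j=1}^d M_{ij}\theta_j\Big),\quad i=1,\dots,d,$$ with $\boldsymbol\theta^{(\varepsilon)}(0) = (C_1\varepsilon^{k_1},\dots,C_d\varepsilon^{k_d})$. Then there exists $\varepsilon_0>0$ such that for all $\varepsilon\in(0,\varepsilon_0]$ and all $i\in\{1,\dots,d\}$, $t\mapsto\theta_i^{(\varepsilon)}(t)$ is nondecreasing on $[0,\infty)$.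
   Context: Vector inequalities are coordinatewise. *)

From HB Require Import structures.
From mathcomp Require Import all_boot all_order all_algebra.
From mathcomp Require Import all_classical all_reals all_analysis.
Set Implicit Arguments. Unset Strict Implicit. Unset Printing Implicit Defensive.
Import Order.TTheory GRing.Theory Num.Theory.
Local Open Scope ring_scope.

Definition lv_rhs (R : realType) (n d : nat) (X : 'M[R]_(n, d)) (y : 'cV[R]_n)
  (th : 'I_d -> R) (i : 'I_d) : R :=
  th i * ((X^T *m y) i ord0 - \sum_(j < d) (X^T *m X) i j * th j).

From HB Require Import structures.
From mathcomp Require Import all_boot all_order all_algebra.
From mathcomp Require Import all_classical all_reals all_analysis.
From mathcomp Require Import ring lra.
Import Order.TTheory GRing.Theory Num.Theory.
Import numFieldNormedType.Exports.
Local Open Scope classical_set_scope.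
Local Open Scope ring_scope.

(* With the growth rates g_i = r_i - sum_j M_ij theta_j the system reads
   theta_i' = theta_i g_i.  For small eps the initial state has theta > 0 and
   g > 0, because M_ij <= 0 off the diagonal gives g_i >= r_i - M_ii theta_i.
   Positivity of all theta_i and g_i persists: as long as it holds, theta is
   nondecreasing, so g_i' = - sum_j M_ij theta_j g_j >= - |M_ii| theta_i(tau) g_i
   on [0, tau] and an exponential integrating factor keeps g_i(tau) > 0; by
   continuity it also holds a little beyond tau.  Continuous induction on
   [0, +oo[ makes theta_i' = theta_i g_i nonnegative for all times. *)

Section real_facts.
Context {R : realType}.

Lemma near_at_right_itvP {x : R} {P : R -> Prop} :
  (\forall y \near x^'+, P y) ->
  exists2 e : R, 0 < e & forall y, x < y -> y <= x + e -> P y.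
Proof.
rewrite near_withinE => -[e /= e0 xeP].
exists (e / 2); first by rewrite divr_gt0.
move=> y xy ye; apply: xeP => //=.
by rewrite distrC ger0_norm ?subr_ge0 ?ltW//; lra.
Qed.

Lemma nonneg_real_induction (P : R -> Prop) :
  (forall t, 0 <= t -> (forall s, 0 <= s -> s < t -> P s) -> P t) ->
  (forall t, 0 <= t -> P t -> \forall s \near t^'+, P s) ->
  forall t, 0 <= t -> P t.
Proof.
move=> P_closed P_open T T0; apply: contrapT => nPT.
pose S := [set t : R | 0 <= t /\ forall s, 0 <= s -> s <= t -> P s].
have S0 : S 0.
  split=> // s s0 s0'; have -> : s = 0 by apply/le_anti; rewrite s0 s0'.
  by apply: P_closed => // u u0 /(le_lt_trans u0); rewrite ltxx.
have S_ubT t : S t -> t <= T.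
  by move=> [t0 Pt]; rewrite leNgt; apply/negP => /ltW /(Pt T T0).
have supS : has_sup S by split; [exists 0 | exists T => t /S_ubT].
pose tau := sup S.
have tau0 : 0 <= tau := sup_upper_bound supS S0.
have P_below s : 0 <= s -> s < tau -> P s.
  move=> s0 st; have tau_s : 0 < tau - s by rewrite subr_gt0.
  have [t [_ Pt] st'] := sup_adherent tau_s supS.
  by apply: Pt => //; rewrite ltW //; move: st'; rewrite /tau; lra.
have [e e0 P_right] :=
  near_at_right_itvP (P_open tau tau0 (P_closed _ tau0 P_below)).
have : S (tau + e).
  split=> [|s s0 se]; first lra.
  have [st|] := ltP s tau; first exact: P_below.
  rewrite le_eqVlt => /predU1P[<-|ts]; first exact: P_closed.
  exact: P_right.
by move/(sup_upper_bound supS); rewrite -/tau; lra.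
Qed.

Section derivable_on_pos.
Context {f : R -> R}.
Hypothesis f_cvg0 : f x @[x --> 0^'+] --> f 0.
Hypothesis f_derivable : forall t, 0 < t -> derivable f t 1.

Lemma continuous_pos_of_derivable t : 0 < t -> {for t, continuous f}.
Proof.
by move=> t0; apply/differentiable_continuous/derivable1_diffP/f_derivable.
Qed.

Lemma cvg_at_right_of_derivable t : 0 <= t -> f x @[x --> t^'+] --> f t.
Proof.
rewrite le_eqVlt => /predU1P[<- //|t0].
exact/cvg_at_right_filter/continuous_pos_of_derivable.
Qed.

Lemma within_continuous_of_derivable : {within `[0, +oo[, continuous f}.
Proof.
apply/continuous_within_itvcyP; split=> // t.
by rewrite in_itv andbT => /continuous_pos_of_derivable.
Qed.

End derivable_on_pos.

Lemma derive_ge0_le {f df : R -> R} {b : R} :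
  f x @[x --> 0^'+] --> f 0 ->
  (forall t : R, 0 < t -> is_derive t 1 f (df t)) ->
  (forall t, 0 < t -> t < b -> 0 <= df t) ->
  forall s t, 0 <= s -> s <= t -> t <= b -> f s <= f t.
Proof.
move=> f_cvg0 f_derive df_ge0 s t s0 st tb.
have f_derivable u : 0 < u -> derivable f u 1.
  by move=> /f_derive ?.
apply: (@ger0_derive1_ndecr _ _ 0 b) => // [u|u|].
- by rewrite in_itv /= => /andP[/f_derivable].
- rewrite in_itv /= => /andP[u0 ub]; have := f_derive _ u0 => ?.
  by rewrite derive1E derive_val df_ge0.
- apply: continuous_subspaceW (within_continuous_of_derivable f_cvg0 f_derivable).
  exact: subset_itvl.
Qed.

End real_facts.

Section lotka_volterra.
Context {R : realType} {d : nat} (r : 'I_d -> R) (M : 'I_d -> 'I_d -> R).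
Hypothesis M_offdiag_le0 : forall i j, i != j -> M i j <= 0.

Lemma offdiag_le0_sum_le i (v : 'I_d -> R) : (forall j, 0 <= v j) ->
  \sum_(j < d) M i j * v j <= M i i * v i.
Proof.
move=> v_ge0; rewrite (bigD1 i) //= -[leRHS]addr0 lerD2l.
by apply: sumr_le0 => j ji; rewrite mulr_le0_ge0 // M_offdiag_le0 // eq_sym.
Qed.

Definition growth_rate (theta : 'I_d -> R -> R) i t :=
  r i - \sum_(j < d) M i j * theta j t.

Variable theta : 'I_d -> R -> R.
Local Notation rate := (growth_rate theta).
Hypothesis theta_cvg0 : forall i, theta i x @[x --> 0^'+] --> theta i 0.
Hypothesis theta_derive : forall i (t : R), 0 < t ->
  is_derive t 1 (theta i) (theta i t * rate i t).
Hypothesis theta0_gt0 : forall i, 0 < theta i 0.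
Hypothesis rate0_gt0 : forall i, 0 < rate i 0.

Lemma theta_derivable i (t : R) : 0 < t -> derivable (theta i) t 1.
Proof. by move=> /(theta_derive i) ?. Qed.

Lemma growth_rate_derive i (t : R) : 0 < t ->
  is_derive t 1 (rate i) (- \sum_(j < d) M i j * (theta j t * rate j t)).
Proof.
move=> t0.
have lin : is_derive t 1 (\sum_(j < d) M i j \*: theta j)
    (\sum_(j < d) M i j *: (theta j t * rate j t)).
  by apply: is_derive_sum => j; apply: is_deriveZ; exact: theta_derive.
have -> : rate i = cst (r i) - \sum_(j < d) M i j \*: theta j.
  by apply/funext => u; rewrite /growth_rate /= fct_sumE.
have cst_sub := is_deriveB (is_derive_cst (r i) t 1) lin.
by apply: is_derive_eq cst_sub _; rewrite sub0r.
Qed.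

Lemma growth_rate_cvg0 i : rate i x @[x --> 0^'+] --> rate i 0.
Proof.
apply: cvgB; first exact: cvg_cst.
apply: cvg_big => [|j _]; first exact: add_continuous.
by apply: cvgM; [exact: cvg_cst | exact: theta_cvg0].
Qed.

Definition growing_at t := forall i, 0 < theta i t /\ 0 < rate i t.

Lemma theta_le_of_growing i (a b : R) : 0 <= a -> a <= b ->
  (forall s, 0 < s -> s < b -> growing_at s) -> theta i a <= theta i b.
Proof.
move=> a0 ab growing.
apply: (derive_ge0_le (theta_cvg0 i) (theta_derive i) _ _ _ a0 ab) => // s s0 sb.
by have [? ?] := growing s s0 sb i; rewrite mulr_ge0 // ltW.
Qed.

Lemma growing_closed tau : 0 <= tau ->
  (forall s, 0 <= s -> s < tau -> growing_at s) -> growing_at tau.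
Proof.
move=> tau0 growing_below i.
have growing s : 0 < s -> s < tau -> growing_at s.
  by move=> /ltW; exact: growing_below.
have theta_le s : 0 <= s -> s <= tau -> theta i s <= theta i tau.
  by move=> s0 stau; apply: theta_le_of_growing.
split; first exact: lt_le_trans (theta0_gt0 i) (theta_le _ (lexx _) tau0).
(* On ]0, tau[ the rate satisfies rate i' >= - K * rate i. *)
pose K := `|M i i| * theta i tau.
pose F x := expR (K * x) * rate i x.
have expK_derive (x : R) :
    is_derive x 1 (fun u => expR (K * u)) (expR (K * x) * K).
  have scale_derive : is_derive x 1 (K \*: @id R) (K *: 1).
    exact: is_deriveZ.
  have chain := is_derive1_comp (is_derive_expR ((K \*: @id R) x)) scale_derive.
  by apply: is_derive_eq chain _; rewrite /GRing.scale /= mulr1.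
have F_derive (x : R) : 0 < x -> is_derive x 1 F
    (expR (K * x) * (K * rate i x - \sum_(j < d) M i j * (theta j x * rate j x))).
  move=> x0; have FM := is_deriveM (expK_derive x) (growth_rate_derive i _ x0).
  by apply: is_derive_eq FM _; rewrite /GRing.scale /=; ring.
have F_cvg0 : F x @[x --> 0^'+] --> F 0.
  apply: cvgM (growth_rate_cvg0 i).
  apply: continuous_cvg; first exact: continuous_expR.
  by apply: cvgM; [exact: cvg_cst | exact: cvg_at_right_filter cvg_id].
have : F 0 <= F tau.
  apply: (derive_ge0_le F_cvg0 F_derive _ _ _ (lexx 0) tau0 (lexx tau)).
  move=> x x0 xtau.
  have [theta_x_gt0 rate_x_gt0] := growing x x0 xtau i.
  rewrite mulr_ge0 ?expR_ge0 // subr_ge0.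
  have flux_ge0 j : 0 <= theta j x * rate j x.
    by have [? ?] := growing x x0 xtau j; rewrite mulr_ge0 // ltW.
  apply: le_trans (offdiag_le0_sum_le i _ flux_ge0) _.
  rewrite mulrA; apply: ler_wpM2r; first exact: ltW.
  apply: le_trans (ler_wpM2r (ltW theta_x_gt0) (ler_norm _)) _.
  by rewrite ler_wpM2l // theta_le // ltW.
rewrite /F mulr0 expR0 mul1r => rate0_le.
by have := lt_le_trans (rate0_gt0 i) rate0_le; rewrite pmulr_rgt0 // expR_gt0.
Qed.

Lemma growth_rate_derivable i (t : R) : 0 < t -> derivable (rate i) t 1.
Proof. by move=> /(growth_rate_derive i) ?. Qed.

Lemma growing_open tau : 0 <= tau -> growing_at tau ->
  \forall s \near tau^'+, growing_at s.
Proof.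
move=> tau0 growing_tau; apply: filter_forall => i.
have [theta_gt0 rate_gt0] := growing_tau i.
have theta_right :=
  cvg_at_right_of_derivable (theta_cvg0 i) (theta_derivable i) _ tau0.
have rate_right :=
  cvg_at_right_of_derivable (growth_rate_cvg0 i) (growth_rate_derivable i) _ tau0.
near=> s; split; near: s.
- exact: cvgr_gt theta_right _ theta_gt0.
- exact: cvgr_gt rate_right _ rate_gt0.
Unshelve. all: by end_near. Qed.

Lemma growing_forever t : 0 <= t -> growing_at t.
Proof. exact: nonneg_real_induction growing_closed growing_open t. Qed.

Lemma theta_nondecreasing i (s t : R) :
  0 <= s -> s <= t -> theta i s <= theta i t.
Proof.
move=> s0 st; apply: theta_le_of_growing => // u u0 _.
exact/growing_forever/ltW.
Qed.

End lotka_volterra.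

Theorem lemma1 (R : realType) (n d : nat) (X : 'M[R]_(n, d)) (y : 'cV[R]_n)
  (C k : 'I_d -> R) :
  (forall i : 'I_d, 0 < (X^T *m y) i ord0) ->
  (forall i j : 'I_d, i != j -> (X^T *m X) i j <= 0) ->
  (forall i, 0 < C i) -> (forall i, 0 < k i) ->
  exists2 eps0 : R, 0 < eps0 &
    forall eps : R, 0 < eps -> eps <= eps0 ->
    forall theta : 'I_d -> R -> R,
      (forall i, theta i 0 = C i * powR eps (k i)) ->
      (forall i, theta i x @[x --> 0^'+] --> theta i 0) ->
      (forall i (t : R), 0 < t ->
         is_derive t 1 (theta i) (lv_rhs X y (fun j => theta j t) i)) ->
      forall i (s t : R), 0 <= s -> s <= t -> theta i s <= theta i t.
Proof.
move=> r_gt0 M_offdiag_le0 C_gt0 k_gt0.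
pose r i := (X^T *m y) i ord0.
pose M i j := (X^T *m X) i j.
have small_init : \forall a \near 0^'+, forall i, M i i * (C i * a `^ k i) < r i.
  apply: filter_forall => i.
  have : M i i * (C i * a `^ k i) @[a --> 0^'+] --> M i i * (C i * 0).
    by apply: cvgMr; apply: cvgMr; exact: powR_cvg0 (k_gt0 i).
  by rewrite !mulr0 => cvg_init; exact: cvgr_lt cvg_init _ (r_gt0 i).
have [eps0 eps0_gt0 small_eps] := near_at_right_itvP small_init.
exists eps0 => // eps eps_gt0 eps_le theta theta0 theta_cvg0 theta_derive.
have theta0_gt0 i : 0 < theta i 0 by rewrite theta0 mulr_gt0 ?C_gt0 ?powR_gt0.
apply: (theta_nondecreasing r M M_offdiag_le0 _ theta_cvg0 theta_derive
  theta0_gt0).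
move=> i; rewrite /growth_rate subr_gt0.
have theta0_ge0 j : 0 <= theta j 0 by exact: ltW.
apply: le_lt_trans (offdiag_le0_sum_le _ M_offdiag_le0 i _ theta0_ge0) _.
by rewrite theta0; apply: (small_eps eps) => //; rewrite add0r.
Qed.
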